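(* Fix integers $0\le p<q$. The span of the elements $\mathbf S^f$ of $\mathbf{EFSym}$ with $f:[n]\to[n]$ ($n\ge0$) satisfying $f^p=f^q$ (powers under composition) is a Hopf subalgebra of $\mathbf{EFSym}$. In particular, the $\mathbf S^f$ with $f$ idempotent span a Hopf subalgebra.
   Context: $\mathbf{EFSym}$: over $A=\{a_{ij}:i\ne j,\ i,j\ge1\}$ with $a_{ij}\prec a_{kl}$ iff $j=k$, for $f:[n]\to[n]$, $\mathbf S^f$ is the sum of words $w_1\cdots w_n$ over $A$ with $w_{f(j)}\prec w_j$ whenever $f(j)\ne j$; the $\mathbf S^f$ are linearly independent and span $\mathbf{EFSym}$, with product $\mathbf S^f\mathbf S^g=\mathbf S^{f\bullet g}$ (shifted concatenation: $i\mapsto f(i)$ for $i\le n$, $n+i\mapsto g(i)+n$) and coproduct $\Delta\mathbf S^f=\sum_{I\models f}\mathbf S^{\mathrm{std}(f^{[n]\setminus I})}\otimes\mathbf S^{\mathrm{std}(f^I)}$, where $I\models f$ means $f^{-1}(I)\subseteq I$, $f^I(x)=f(x)$ if $f(x)\in I$ and $x$ otherwise, and $\mathrm{std}$ conjugates by the increasing bijection $I\to[|I|]$. $f^0$ is the identity. *)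

From HB Require Import structures.
From mathcomp Require Import all_boot all_order all_algebra.
Set Implicit Arguments. Unset Strict Implicit. Unset Printing Implicit Defensive.
Import GRing.Theory.
Local Open Scope ring_scope.

(* An endofunction f : [n] -> [n] is encoded (0-based) as the sequence
   [:: f 0; ...; f (n-1)] of length n with all entries < n. *)
Definition endofun := seq nat.
Definition valid_ef (f : endofun) : bool := all (fun y => (y < size f)%N) f.
Definition app_ef (f : endofun) (x : nat) : nat := nth 0%N f x.

Definition pow_ef (k : nat) (f : endofun) (x : nat) : nat := iter k (app_ef f) x.
Definition pow_eq (p q : nat) (f : endofun) : bool :=
  all (fun x => pow_ef p f x == pow_ef q f x) (iota 0 (size f)).

Definition bullet (f g : endofun) : endofun := f ++ map (addn (size f)) g.

(* subsets I of [n] as bit masks of length n *)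
Fixpoint masks (n : nat) : seq bitseq :=
  if n is n'.+1 then [seq b :: m | b <- [:: false; true], m <- masks n'] else [:: [::]].
Definition inI (m : bitseq) (x : nat) : bool := nth false m x.
Definition models (m : bitseq) (f : endofun) : bool :=
  all (fun x => inI m (app_ef f x) ==> inI m x) (iota 0 (size f)).
(* the increasing bijection I -> [|I|] : y |-> #{ z in I | z < y } *)
Definition rank (m : bitseq) (y : nat) : nat := count id (take y m).
Definition std_restr (m : bitseq) (f : endofun) : endofun :=
  [seq rank m (if inI m (app_ef f x) then app_ef f x else x)
  | x <- mask m (iota 0 (size f))].

(* Delta S^f as a list of pairs (std f^{[n]\I}, std f^I), I |= f *)
Definition cop_basis (f : endofun) : seq (endofun * endofun) :=
  [seq (std_restr (map negb m) f, std_restr m f)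
  | m <- masks (size f) & models m f].

Section Alg.
Variable R : fieldType.

(* Elements of EFSym (resp. EFSym (x) EFSym) as formal R-linear combinations
   of basis elements S^f (resp. S^f (x) S^g). *)
Definition efsym := seq (R * endofun).
Definition efsym2 := seq (R * (endofun * endofun)).

Definition coef (x : efsym) (f : endofun) : R :=
  \sum_(c <- x) c.1 * (c.2 == f)%:R.
Definition coef2 (z : efsym2) (fg : endofun * endofun) : R :=
  \sum_(c <- z) c.1 * (c.2 == fg)%:R.

Definition scale (a : R) (x : efsym) : efsym := [seq (a * c.1, c.2) | c <- x].
Definition one_ef : efsym := [:: (1, [::])].
Definition mul_ef (x y : efsym) : efsym :=
  [seq (a.1 * b.1, bullet a.2 b.2) | a <- x, b <- y].
Definition comul_ef (x : efsym) : efsym2 :=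
  flatten [seq [seq (a.1, fg) | fg <- cop_basis a.2] | a <- x].
Definition counit_ef (x : efsym) : R :=
  \sum_(c <- x) c.1 * (size c.2 == 0)%N%:R.

(* Antipode on the basis, the unique map with m (S (x) id) Delta = eta epsilon:
   S(S^empty) = 1 and, for n > 0,
   S(S^f) = - sum_{I |= f, I nonempty} S(S^{std f^{[n]\I}}) S^{std f^I}.
   k is fuel (k > size f suffices). *)
Fixpoint antip_basis (k : nat) (f : endofun) : efsym :=
  if k is k'.+1 then
    if f is [::] then one_ef
    else scale (-1) (flatten
      [seq mul_ef (antip_basis k' (std_restr (map negb m) f)) [:: (1, std_restr m f)]
      | m <- masks (size f) & models m f && has id m])
  else [::].
Definition antipode_ef (x : efsym) : efsym :=
  flatten [seq scale a.1 (antip_basis (size a.2).+1 a.2) | a <- x].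

(* the span of {S^f | P f}: by linear independence of the S^f, x lies in it
   iff its support is contained in P *)
Definition in_span (P : pred endofun) (x : efsym) : Prop :=
  forall f, coef x f != 0 -> P f.
Definition in_span2 (P : pred endofun) (z : efsym2) : Prop :=
  forall fg, coef2 z fg != 0 -> P fg.1 /\ P fg.2.

Definition hopf_subalgebra (P : pred endofun) : Prop :=
  [/\ in_span P one_ef,
      forall x y, in_span P x -> in_span P y -> in_span P (mul_ef x y),
      forall x, in_span P x -> in_span2 P (comul_ef x)
    & forall x, in_span P x -> in_span P (antipode_ef x)].
End Alg.

From mathcomp Require Import all_boot all_order all_algebra.
Set Implicit Arguments. Unset Strict Implicit. Unset Printing Implicit Defensive.
Import GRing.Theory.

(* The relation f^p = f^q is stable under shifted concatenation, which acts
   on the two blocks separately. For I |= f, the complement of I is mapped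
   into itself by f, so on it f^{[n]\I} is just f. On I, f^I follows the
   orbit of f until the orbit is about to leave I and then stops; since an
   orbit that leaves I never returns while f^p = f^q makes it eventually
   periodic from step p on, it must stop before step p, so (f^I)^p and
   (f^I)^q agree as well. Standardisation only relabels points. On the
   algebra side, product, coproduct and antipode are linear extensions of maps
   on basis elements, so it suffices that these maps preserve the basis of the
   span; the antipode is handled by induction on its recursive definition. *)

Section StoppedIteration.
Variables (T : Type) (P : pred T) (F : T -> T).

Definition stop (x : T) : T := if P (F x) then F x else x.

Lemma iter_stop_inside x k :
  (forall j, j <= k -> P (iter j F x)) -> iter k stop x = iter k F x.
Proof.
elim: k => // k IH inside; rewrite !iterS IH => [|j le_jk]; last first.
  by apply: inside; rewrite leqW.
by rewrite /stop -iterS inside.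
Qed.

Lemma iter_stop_exit x t k :
  (forall j, j <= t -> P (iter j F x)) -> ~~ P (iter t.+1 F x) ->
  iter k stop x = iter (minn k t) F x.
Proof.
move=> inside exit; have [le_kt | lt_tk] := leqP k t.
  apply: iter_stop_inside => j le_jk.
  by apply: inside; rewrite (leq_trans le_jk).
rewrite -(subnK (ltnW lt_tk)) iterD (iter_stop_inside (k := t)) // iter_fix //.
by rewrite /stop -iterS (negbTE exit).
Qed.

Lemma iter_periodic x p q c :
  p <= q -> iter p F x = iter q F x -> iter (c * (q - p) + p) F x = iter p F x.
Proof.
move=> le_pq eq_pq; elim: c => // c IH.
by rewrite mulSn -addnA iterD IH -iterD subnK.
Qed.

Lemma iter_stop_eq x p q :
  P x -> (forall j, ~~ P (iter j F x) -> ~~ P (iter j.+1 F x)) ->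
  p < q -> iter p F x = iter q F x -> iter p stop x = iter q stop x.
Proof.
move=> Px no_return lt_pq eq_pq.
pose exits := has (fun j => ~~ P (iter j F x)) (iota 0 q.+1).
have [|stay] := boolP exits; last first.
  have inside j : j <= q -> P (iter j F x).
    by move=> le_jq; apply/negPn; apply: (hasPn stay); rewrite mem_iota.
  rewrite !iter_stop_inside // => j le_jp.
  by apply: inside; rewrite (leq_trans le_jp) // ltnW.
case/hasP=> j0 _ Nj0; have ex_exit : exists j, ~~ P (iter j F x) by exists j0.
have [[|t] exit first_exit] := ex_minnP ex_exit; first by rewrite Px in exit.
have inside j : j <= t -> P (iter j F x).
  by move=> le_jt; apply/negPn/negP => /first_exit; rewrite leqNgt ltnS le_jt.
have outside e : ~~ P (iter (e + t.+1) F x).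
  by elim: e => // e IH; rewrite addSn no_return.
have le_tp : t <= p.
  rewrite leqNgt; apply/negP => lt_pt.
  have := outside (t.+1 * (q - p) + p - t.+1).
  rewrite subnK; first by rewrite iter_periodic ?inside // ltnW.
  by rewrite (leq_trans _ (leq_addr _ _)) // leq_pmulr // subn_gt0.
rewrite !(iter_stop_exit (t := t)) //.
by rewrite (minn_idPr le_tp) (minn_idPr (leq_trans le_tp (ltnW lt_pq))).
Qed.

End StoppedIteration.

Lemma pow_eqP p q f :
  reflect (forall x, x < size f -> pow_ef p f x = pow_ef q f x) (pow_eq p q f).
Proof.
apply: (iffP allP) => [eq_pq x lt_xf | eq_pq x].
  by apply/eqP/eq_pq; rewrite mem_iota.
by rewrite mem_iota => /andP [_ lt_xf]; apply/eqP/eq_pq.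
Qed.

Lemma iter_app_ef_lt f k x :
  valid_ef f -> x < size f -> iter k (app_ef f) x < size f.
Proof.
move=> /allP valid_f lt_xf; elim: k => //= k IH.
by apply: valid_f; rewrite mem_nth.
Qed.

Lemma size_bullet f g : size (bullet f g) = size f + size g.
Proof. by rewrite size_cat size_map. Qed.

Lemma iter_bullet_l f g k x :
  valid_ef f -> x < size f ->
  iter k (app_ef (bullet f g)) x = iter k (app_ef f) x.
Proof.
move=> valid_f lt_xf; elim: k => //= k ->.
by rewrite /app_ef /bullet nth_cat iter_app_ef_lt.
Qed.

Lemma iter_bullet_r f g k y :
  valid_ef g -> y < size g ->
  iter k (app_ef (bullet f g)) (size f + y) = size f + iter k (app_ef g) y.
Proof.
move=> valid_g lt_yg; elim: k => //= k ->.
rewrite /app_ef /bullet nth_cat ltnNge leq_addr /= addKn (nth_map 0) //.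
exact: iter_app_ef_lt.
Qed.

Lemma valid_bullet f g : valid_ef f -> valid_ef g -> valid_ef (bullet f g).
Proof.
rewrite /valid_ef size_bullet all_cat all_map => /allP valid_f /allP valid_g.
apply/andP; split; apply/allP => y y_in /=.
  by rewrite (leq_trans (valid_f y y_in)) ?leq_addr.
by rewrite ltn_add2l valid_g.
Qed.

Lemma pow_eq_bullet p q f g :
  valid_ef f -> valid_ef g -> pow_eq p q f -> pow_eq p q g ->
  pow_eq p q (bullet f g).
Proof.
move=> valid_f valid_g /pow_eqP eq_f /pow_eqP eq_g.
apply/pow_eqP => x; rewrite size_bullet /pow_ef => lt_x.
have [lt_xf | le_fx] := ltnP x (size f).
  by rewrite !iter_bullet_l //; apply: eq_f.
have lt_xg : x - size f < size g by rewrite ltn_subLR.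
by rewrite -(subnKC le_fx) !iter_bullet_r //; congr (_ + _); apply: eq_g.
Qed.

Section Relabel.
Variables (T : eqType) (s : seq T) (h : T -> T).
Hypothesis h_s : {in s, forall y, h y \in s}.

(* h transported to [size s], points being renamed by their index in s *)
Definition relabel : endofun := [seq index (h y) s | y <- s].

Lemma relabel_valid : valid_ef relabel.
Proof.
apply/allP => i /mapP [y y_s ->].
by rewrite size_map index_mem h_s.
Qed.

Lemma iter_relabel k y :
  y \in s -> iter k (app_ef relabel) (index y s) = index (iter k h y) s.
Proof.
move=> y_s; elim: k => //= k ->.
have hk_s : iter k h y \in s by elim: k => //= k IH; apply: h_s.
by rewrite /app_ef (nth_map (iter k h y)) ?index_mem // nth_index.
Qed.

Lemma relabel_pow_eq p q :
  uniq s -> {in s, forall y, iter p h y = iter q h y} -> pow_eq p q relabel.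
Proof.
move=> uniq_s eq_pq; apply/pow_eqP => i; rewrite size_map => lt_is.
have y0 : T by move: lt_is; case: s => // y0.
by rewrite /pow_ef -(index_uniq y0 lt_is uniq_s) !iter_relabel ?eq_pq ?mem_nth.
Qed.

End Relabel.

Lemma inI_lt m y : inI m y -> y < size m.
Proof. by rewrite /inI; case: ltnP => // le_my; rewrite nth_default. Qed.

Lemma inI_negb m y : inI (map negb m) y = (y < size m) && ~~ inI m y.
Proof.
rewrite /inI; case: ltnP => [lt_ym | le_my].
  by rewrite (nth_map false).
by rewrite nth_default ?size_map.
Qed.

Lemma mask_iotaS b m :
  mask (b :: m) (iota 0 (size m).+1) =
  nseq b 0 ++ map succn (mask m (iota 0 (size m))).
Proof. by rewrite [iota _ _]/= mask_cons map_mask -(iotaDl 1 0). Qed.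

Lemma mem_mask_iota m y : (y \in mask m (iota 0 (size m))) = inI m y.
Proof.
elim: m y => [|b m IH] [|y] //; rewrite mask_iotaS mem_cat mem_nseq.
  by case: b; rewrite /inI //=; apply/mapP => -[].
by rewrite andbF (mem_map succn_inj) IH.
Qed.

Lemma index_mask_iota m y :
  inI m y -> index y (mask m (iota 0 (size m))) = rank m y.
Proof.
elim: m y => [|b m IH] [|y] //; rewrite mask_iotaS index_cat mem_nseq.
  by rewrite /inI /= => ->.
rewrite andbF size_nseq (index_map succn_inj) => /IH ->.
by case: b.
Qed.

Lemma modelsP m f :
  reflect (forall x, x < size f -> inI m (app_ef f x) -> inI m x) (models m f).
Proof.
apply: (iffP allP) => [I_f x lt_xf | I_f x].
  by move: (I_f x); rewrite mem_iota lt_xf => /(_ isT) /implyP.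
by rewrite mem_iota => /andP [_ /I_f /implyP].
Qed.

Lemma masks_size n m : m \in masks n -> size m = n.
Proof.
elim: n m => [|n IH] m /=; first by rewrite inE => /eqP ->.
by rewrite !mem_cat => /or3P [] // /mapP [m' /IH <- ->].
Qed.

Section Standardisation.
Variables (m : bitseq) (f : endofun).
Hypothesis size_mf : size m = size f.

Let I := mask m (iota 0 (size m)).

Lemma std_restrE : std_restr m f = relabel I (stop (inI m) (app_ef f)).
Proof.
rewrite /std_restr -size_mf; apply/eq_in_map => x.
rewrite mem_mask_iota => x_I; rewrite index_mask_iota //.
by rewrite /stop; case: ifP.
Qed.

Lemma std_restr_valid : valid_ef (std_restr m f).
Proof.
rewrite std_restrE; apply: relabel_valid => x.
by rewrite !mem_mask_iota /stop; case: ifP.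
Qed.

Lemma std_restr_pow_eq p q :
  (forall y, inI m y -> iter p (stop (inI m) (app_ef f)) y
                       = iter q (stop (inI m) (app_ef f)) y) ->
  pow_eq p q (std_restr m f).
Proof.
move=> eq_pq; rewrite std_restrE; apply: relabel_pow_eq => [x||x].
- by rewrite !mem_mask_iota /stop; case: ifP.
- by rewrite mask_uniq ?iota_uniq.
- by rewrite mem_mask_iota; apply: eq_pq.
Qed.

End Standardisation.

Section ModelsRestriction.
Variables (p q : nat) (m : bitseq) (f : endofun).
Hypotheses (valid_f : valid_ef f) (eq_pq : pow_eq p q f).
Hypotheses (size_mf : size m = size f) (m_f : models m f).

Lemma std_restr_compl_pow_eq : pow_eq p q (std_restr (map negb m) f).
Proof.
have size_negb : size (map negb m) = size f by rewrite size_map.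
apply: std_restr_pow_eq => // y y_out.
have out_f x : inI (map negb m) x -> inI (map negb m) (app_ef f x).
  rewrite !inI_negb size_mf => /andP [lt_xf x_out].
  rewrite (iter_app_ef_lt 1) //=; apply: contra x_out.
  by move/modelsP: m_f; apply.
have orbit_out j : inI (map negb m) (iter j (app_ef f) y).
  by elim: j => //= j IH; apply: out_f.
have iter_stopE k :
    iter k (stop (inI (map negb m)) (app_ef f)) y = iter k (app_ef f) y.
  by apply: iter_stop_inside => j _; apply: orbit_out.
rewrite !iter_stopE; move: y_out; rewrite inI_negb size_mf => /andP [lt_yf _].
by move/pow_eqP: eq_pq; apply.
Qed.

Lemma std_restr_models_pow_eq : p < q -> pow_eq p q (std_restr m f).
Proof.
move=> lt_pq; apply: std_restr_pow_eq => // y y_I.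
have lt_yf : y < size f by rewrite -size_mf inI_lt.
apply: iter_stop_eq => // [j|]; last by move/pow_eqP: eq_pq; apply.
by apply: contra; move/modelsP: m_f; apply; apply: iter_app_ef_lt.
Qed.

End ModelsRestriction.

Section FormalCombinations.
Local Open Scope ring_scope.
Variable R : fieldType.

Definition fcoef (B : eqType) (x : seq (R * B)) (b : B) : R :=
  \sum_(c <- x) c.1 * (c.2 == b)%:R.

Definition supported (B : eqType) (P : pred B) (x : seq (R * B)) : Prop :=
  forall b, fcoef x b != 0 -> P b.

Definition linext (A B : eqType) (T : A -> seq (R * B)) (x : seq (R * A)) :=
  flatten [seq [seq (a.1 * c.1, c.2) | c <- T a.2] | a <- x].

Lemma big_fcoef_undup (A : eqType) (x : seq (R * A)) (H : A -> R) :
  \sum_(c <- x) c.1 * H c.2 = \sum_(a <- undup (map snd x)) fcoef x a * H a.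
Proof.
under [RHS]eq_bigr => a _ do rewrite /fcoef big_distrl /=.
rewrite exchange_big /= [LHS]big_seq [RHS]big_seq; apply: eq_bigr => c c_x.
have c2_x : c.2 \in undup (map snd x) by rewrite mem_undup map_f.
rewrite (bigD1_seq c.2) ?undup_uniq //= eqxx mulr1 big1 ?addr0 // => a.
by rewrite eq_sym => /negbTE ->; rewrite mulr0 mul0r.
Qed.

(* the coefficients of x may cancel on indices outside P, hence the
   regrouping by index *)
Lemma supported_sum0 (A : eqType) (P : pred A) (x : seq (R * A)) (H : A -> R) :
  supported P x -> (forall a, P a -> H a = 0) -> \sum_(c <- x) c.1 * H c.2 = 0.
Proof.
move=> supp_x H_P; rewrite big_fcoef_undup big1 // => a _.
have [/H_P -> | Na] := boolP (P a); first by rewrite mulr0.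
by rewrite (eqP (contraR (@supp_x a) Na)) mul0r.
Qed.

Lemma fcoef_flatten (B : eqType) (L : seq (seq (R * B))) b :
  fcoef (flatten L) b = \sum_(x <- L) fcoef x b.
Proof. by rewrite /fcoef big_flatten. Qed.

Lemma fcoef_scale (B : eqType) (a : R) (x : seq (R * B)) b :
  fcoef [seq (a * c.1, c.2) | c <- x] b = a * fcoef x b.
Proof.
by rewrite /fcoef big_map big_distrr; apply: eq_bigr => c _ /=; rewrite mulrA.
Qed.

Lemma fcoef_linext (A B : eqType) (T : A -> seq (R * B)) x b :
  fcoef (linext T x) b = \sum_(a <- x) a.1 * fcoef (T a.2) b.
Proof.
by rewrite fcoef_flatten big_map; apply: eq_bigr => a _; rewrite fcoef_scale.
Qed.

Lemma supported_linext (A B : eqType) (P : pred A) (Q : pred B) T x :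
  (forall a, P a -> supported Q (T a)) -> supported P x ->
  supported Q (linext T x).
Proof.
move=> supp_T supp_x b; apply: contraR => Nb; rewrite fcoef_linext.
apply/eqP/(supported_sum0 (H := fun a => fcoef (T a) b) supp_x) => a Pa.
by apply/eqP; apply: contraR Nb; apply: supp_T.
Qed.

Lemma supported_map (A B : eqType) (P : pred A) (Q : pred B) (g : A -> B) x :
  (forall a, P a -> Q (g a)) -> supported P x ->
  supported Q [seq (c.1, g c.2) | c <- x].
Proof.
move=> PQ supp_x b; apply: contraR => Nb; rewrite /fcoef big_map /=.
apply/eqP/(supported_sum0 (H := fun a => (g a == b)%:R) supp_x) => a /PQ Qga.
by case: eqP Qga => // ->; rewrite (negbTE Nb).
Qed.

Lemma supported_basis (B : eqType) (P : pred B) (L : seq B) :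
  {in L, forall b, P b} -> supported P [seq (1, b) | b <- L].
Proof.
move=> P_L b; apply: contraR => Nb; rewrite /fcoef big_map big1_seq //= => c.
move=> /P_L Pc; rewrite mul1r.
by case: eqP Pc => // ->; rewrite (negbTE Nb).
Qed.

Lemma supported_flatten (B : eqType) (P : pred B) (L : seq (seq (R * B))) :
  {in L, forall x, supported P x} -> supported P (flatten L).
Proof.
move=> supp_L b; apply: contraR => Nb; rewrite fcoef_flatten big1_seq //= => x.
by move=> /supp_L supp_x; apply/eqP; apply: contraR Nb; apply: supp_x.
Qed.

Lemma supported_scale (B : eqType) (P : pred B) (a : R) (x : seq (R * B)) :
  supported P x -> supported P [seq (a * c.1, c.2) | c <- x].
Proof.
move=> supp_x b; rewrite fcoef_scale => nz; apply: supp_x.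
by apply: contraNneq nz => ->; rewrite mulr0.
Qed.

End FormalCombinations.

Definition endo_pow_eq (p q : nat) (f : endofun) : bool :=
  valid_ef f && pow_eq p q f.

Section PowerRelationSpan.
Variables (R : fieldType) (p q : nat).
Hypothesis lt_pq : p < q.

Local Notation P := (endo_pow_eq p q).
Local Open Scope ring_scope.

Lemma endo_pow_eq_bullet f g : P f -> P g -> P (bullet f g).
Proof.
case/andP=> valid_f eq_f /andP [valid_g eq_g].
by rewrite /endo_pow_eq valid_bullet ?pow_eq_bullet.
Qed.

Lemma endo_pow_eq_std_restr m f :
  P f -> m \in masks (size f) -> models m f ->
  P (std_restr (map negb m) f) && P (std_restr m f).
Proof.
case/andP=> valid_f eq_f /masks_size size_mf m_f.
have size_negb : size (map negb m) = size f by rewrite size_map.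
rewrite /endo_pow_eq !std_restr_valid //.
by rewrite std_restr_compl_pow_eq ?std_restr_models_pow_eq.
Qed.

Lemma endo_pow_eq_cop_basis f fg :
  P f -> fg \in cop_basis f -> P fg.1 && P fg.2.
Proof.
move=> Pf /mapP [m]; rewrite mem_filter => /andP [m_f m_masks] -> /=.
exact: endo_pow_eq_std_restr.
Qed.

Lemma in_span_mul (x y : efsym R) :
  in_span P x -> in_span P y -> in_span P (mul_ef x y).
Proof.
move=> span_x span_y.
have -> : mul_ef x y = linext (fun f => [seq (b.1, bullet f b.2) | b <- y]) x.
  rewrite /mul_ef /linext; congr flatten.
  by apply: eq_map => a; rewrite -map_comp.
apply: supported_linext span_x => f Pf.
by apply: supported_map span_y => g; apply: endo_pow_eq_bullet.
Qed.

Lemma in_span_comul (x : efsym R) : in_span P x -> in_span2 P (comul_ef x).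
Proof.
move=> span_x.
have -> : comul_ef x = linext (fun f => [seq (1, g) | g <- cop_basis f]) x.
  rewrite /comul_ef /linext; congr flatten; apply: eq_map => a.
  by rewrite -[RHS]map_comp; apply: eq_map => g /=; rewrite mulr1.
have supp : supported (fun fg => P fg.1 && P fg.2)
    (linext (fun f => [seq (1, g) | g <- cop_basis f]) x).
  apply: supported_linext span_x => f Pf.
  by apply: supported_basis => g; apply: endo_pow_eq_cop_basis.
by move=> fg /supp /andP.
Qed.

Lemma in_span_antip_basis k f : P f -> in_span P (antip_basis R k f).
Proof.
elim: k f => [|k IH] f Pf; first by move=> g; rewrite /coef big_nil eqxx.
case: f Pf => [|a f] Pf.
  by apply: (supported_basis (L := [:: [::]])) => h; rewrite inE => /eqP ->.
apply: supported_scale; apply: supported_flatten => z /mapP [m].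
rewrite mem_filter => /andP [/andP [m_f _] m_masks] ->.
have /andP [P_out P_in] := endo_pow_eq_std_restr Pf m_masks m_f.
apply: in_span_mul; first exact: IH.
apply: (supported_basis (L := [:: std_restr m (a :: f)])) => h.
by rewrite inE => /eqP ->.
Qed.

Lemma in_span_antipode (x : efsym R) :
  in_span P x -> in_span P (antipode_ef x).
Proof.
move=> span_x.
have -> : antipode_ef x = linext (fun f => antip_basis R (size f).+1 f) x by [].
by apply: supported_linext span_x => f; apply: in_span_antip_basis.
Qed.

End PowerRelationSpan.

Theorem mainTheorem15 (R : fieldType) (p q : nat) :
  (p < q)%N ->
  hopf_subalgebra R (fun f => valid_ef f && pow_eq p q f).
Proof.
move=> lt_pq; split.
- by apply: (supported_basis (L := [:: [::]])) => f; rewrite inE => /eqP ->.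
- exact: in_span_mul.
- exact: in_span_comul.
- exact: in_span_antipode.
Qed.
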